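(* On the region $\{(t,x^1,x^2,x^3)\}\subset\mathbb R^4$ consider the de Sitter metric $ds^2=-dt^2+e^{lt}\delta_{ij}dx^idx^j$ ($l\neq0$ constant, $i,j=1,2,3$) and the symmetric tensor $K$ with components $K_{ij}=e^{2lt}\delta_{ij}$, $K_{tt}=K_{ti}=0$. For a constant $c\ge0$ let $\phi(t)=e^{lt/2}(1+ce^{lt})^{-1/2}$ and $\psi(t)=e^{-lt/2}(1+ce^{lt})^{1/2}$, and define the vector fields $$\Upsilon_0=\phi(t)\,\partial_t,\qquad \Upsilon_i=\phi(t)\,x^i\,\partial_t-\tfrac{2}{l}\psi(t)\,\partial_i\quad(i=1,2,3).$$ Then $\mathcal L_{\Upsilon_0}g=2\Omega_0\,(g+cK)$ and $\mathcal L_{\Upsilon_i}g=2x^i\Omega_0\,(g+cK)$ with $\Omega_0=\tfrac{l}{2}e^{lt/2}(1+ce^{lt})^{-3/2}$. For $c=0$ these reduce to proper conformal Killing vectors of $g$. Consequently, for the geodesic Lagrangian $L=\frac{1}{2n}\left[-\dot t^2+e^{lt}\delta_{ij}\dot x^i\dot x^j\right]-\frac{m^2}{2}n$, along any solution of its Euler–Lagrange equations on which $\kappa:=K^{\mu\nu}p_\mu p_\nu=p_1^2+p_2^2+p_3^2\neq0$, the quantities $\Upsilon_0^\mu p_\mu$ and $\Upsilon_i^\mu p_\mu$ with $c=m^2/\kappa$ are constant.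
   Context: $n(\lambda)>0$ is the einbein, dots denote $d/d\lambda$, $p_\mu=\partial L/\partial\dot{\mathrm x}^\mu$, $K^{\mu\nu}$ is $K$ with indices raised by $g$ (so $K=\sum_i\partial_i\otimes\partial_i$ with indices lowered, a Killing tensor built from spatial translations). *)

From Stdlib Require Import Reals Arith Bool.
From Coquelicot Require Import Coquelicot.
Open Scope bool_scope.
Open Scope R_scope.

(* A point of R^4 in coordinates (x^0, x^1, x^2, x^3) = (t, x^1, x^2, x^3);
   indices >= 4 are irrelevant. *)
Definition pt := nat -> R.
Definition tensor := pt -> nat -> nat -> R.   (* components T_{mu nu} *)
Definition vfield := pt -> nat -> R.          (* components V^mu *)

Definition upd (p : pt) (mu : nat) (s : R) : pt :=
  fun k => if Nat.eqb k mu then s else p k.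

Definition pd (f : pt -> R) (mu : nat) (p : pt) : R :=
  Derive (fun s => f (upd p mu s)) (p mu).

Definition sum4 (f : nat -> R) : R := f 0%nat + f 1%nat + f 2%nat + f 3%nat.

Definition lie (V : vfield) (T : tensor) (p : pt) (mu nu : nat) : R :=
  sum4 (fun r => V p r * pd (fun y => T y mu nu) r p)
  + sum4 (fun r => T p r nu * pd (fun y => V y r) mu p)
  + sum4 (fun r => T p mu r * pd (fun y => V y r) nu p).

Definition spatial_diag (mu nu : nat) : bool :=
  Nat.eqb mu nu && Nat.leb 1 mu && Nat.leb mu 3.

Definition gdS (l : R) : tensor := fun p mu nu =>
  if Nat.eqb mu 0 && Nat.eqb nu 0 then -1
  else if spatial_diag mu nu then exp (l * p 0%nat) else 0.

Definition ginv (l : R) : tensor := fun p mu nu =>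
  if Nat.eqb mu 0 && Nat.eqb nu 0 then -1
  else if spatial_diag mu nu then exp (- (l * p 0%nat)) else 0.

Definition Kt (l : R) : tensor := fun p mu nu =>
  if spatial_diag mu nu then exp (2 * l * p 0%nat) else 0.

Definition Kup (l : R) : tensor := fun p mu nu =>
  sum4 (fun a => sum4 (fun b => ginv l p mu a * ginv l p nu b * Kt l p a b)).

Definition phi (l c t : R) : R := exp (l * t / 2) / sqrt (1 + c * exp (l * t)).
Definition psi (l c t : R) : R := exp (- (l * t) / 2) * sqrt (1 + c * exp (l * t)).
Definition Omega0 (l c t : R) : R :=
  l / 2 * exp (l * t / 2) / (sqrt (1 + c * exp (l * t))) ^ 3.

Definition Ups0 (l c : R) : vfield := fun p k =>
  if Nat.eqb k 0 then phi l c (p 0%nat) else 0.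

Definition Upsi (l c : R) (i : nat) : vfield := fun p k =>
  if Nat.eqb k 0 then phi l c (p 0%nat) * p i
  else if Nat.eqb k i then - (2 / l) * psi l c (p 0%nat) else 0.

Definition is_proper_CKV (V : vfield) (g : tensor) : Prop :=
  exists sigma : pt -> R,
    (forall p mu nu, (mu <= 3)%nat -> (nu <= 3)%nat ->
       lie V g p mu nu = 2 * sigma p * g p mu nu)
    /\ exists p1 p2, sigma p1 <> sigma p2.

Definition Lag (l m nv : R) (q v : pt) : R :=
  / (2 * nv) * (- (v 0%nat) ^ 2
                + exp (l * q 0%nat) * ((v 1%nat) ^ 2 + (v 2%nat) ^ 2 + (v 3%nat) ^ 2))
  - m ^ 2 / 2 * nv.

Definition dLdv (l m nv : R) (q v : pt) (mu : nat) : R :=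
  Derive (fun s => Lag l m nv q (upd v mu s)) (v mu).
Definition dLdq (l m nv : R) (q v : pt) (mu : nat) : R :=
  Derive (fun s => Lag l m nv (upd q mu s) v) (q mu).
Definition dLdn (l m nv : R) (q v : pt) : R :=
  Derive (fun s => Lag l m s q v) nv.

Definition vel (q : R -> pt) (mu : nat) (lam : R) : R := Derive (fun s => q s mu) lam.

Definition mom (l m : R) (n : R -> R) (q : R -> pt) (mu : nat) (lam : R) : R :=
  dLdv l m (n lam) (q lam) (fun k => vel q k lam) mu.

Definition in_interval (a b : Rbar) (lam : R) : Prop := Rbar_lt a lam /\ Rbar_lt lam b.

Definition is_EL_solution (l m : R) (I : R -> Prop) (n : R -> R) (q : R -> pt) : Prop :=
  forall lam, I lam ->
    0 < n lam
    /\ (forall mu, (mu <= 3)%nat -> ex_derive (fun s => q s mu) lam)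
    /\ (forall mu, (mu <= 3)%nat ->
          is_derive (mom l m n q mu) lam
                    (dLdq l m (n lam) (q lam) (fun k => vel q k lam) mu))
    /\ dLdn l m (n lam) (q lam) (fun k => vel q k lam) = 0.

Definition kappa (l m : R) (n : R -> R) (q : R -> pt) (lam : R) : R :=
  sum4 (fun mu => sum4 (fun nu =>
    Kup l (q lam) mu nu * mom l m n q mu lam * mom l m n q nu lam)).

Definition contr (V : vfield) (l m : R) (n : R -> R) (q : R -> pt) (lam : R) : R :=
  sum4 (fun mu => V (q lam) mu * mom l m n q mu lam).

From Stdlib Require Import Reals Lra Lia.
From Coquelicot Require Import Coquelicot.
Open Scope R_scope.

(* With phi' = Omega0, psi' = -(l/2) phi e^{-lt} and Omega0 (1 + c e^{lt}) = (l/2) phi, the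
   Lie derivative identities are a component-by-component computation.  Along a solution the
   x^i are cyclic, so the p_i and hence kappa are conserved; then c kappa = m^2 turns the
   einbein constraint tdot^2 = e^{lt} |xdot|^2 + m^2 n^2 into (g + cK)(xdot, xdot) = 0.
   Since d/dlambda (Upsilon^mu p_mu) = (Omega0 / n) (g + cK)(xdot, xdot), with an extra
   factor x^i for Upsilon_i, the contractions are constant. *)

Section Profiles.

Variables (l c : R).
Hypothesis c_ge0 : 0 <= c.

Lemma conformal_factor_pos t : 0 < 1 + c * exp (l * t).
Proof. pose proof (exp_pos (l * t)); nra. Qed.

Let sqrt_factor_neq0 t : sqrt (1 + c * exp (l * t)) <> 0.
Proof. apply Rgt_not_eq, sqrt_lt_R0, conformal_factor_pos. Qed.

Let sqrt_factor_sq t :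
  sqrt (1 + c * exp (l * t)) * sqrt (1 + c * exp (l * t)) = 1 + c * exp (l * t).
Proof. apply sqrt_sqrt; left; apply conformal_factor_pos. Qed.

Lemma Omega0_phi t : Omega0 l c t = l / 2 * phi l c t / (1 + c * exp (l * t)).
Proof.
  unfold Omega0, phi.
  pose proof (sqrt_factor_neq0 t) as S_neq0; pose proof (sqrt_factor_sq t) as S_sq.
  set (S := sqrt _) in *; rewrite <- S_sq; field; auto.
Qed.

Lemma is_derive_phi t : is_derive (phi l c) t (Omega0 l c t).
Proof.
  rewrite Omega0_phi; unfold phi.
  pose proof (conformal_factor_pos t); pose proof (sqrt_factor_neq0 t).
  auto_derive; [split; auto|].
  rewrite sqrt_factor_sq; unfold Rdiv; field; split; auto; lra.
Qed.

Lemma is_derive_psi t : is_derive (psi l c) t (- (l / 2) * phi l c t / exp (l * t)).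
Proof.
  unfold psi, phi.
  pose proof (conformal_factor_pos t); pose proof (sqrt_factor_neq0 t) as S_neq0.
  pose proof (sqrt_factor_sq t) as S_sq; pose proof (exp_pos (l * t)).
  auto_derive; [auto|].
  replace (exp (l * t / 2)) with (exp (l * t) * exp (- (l * t) / 2))
    by (rewrite <- exp_plus; f_equal; field).
  set (S := sqrt _) in *; set (E := exp (l * t)) in *; unfold Rdiv.
  transitivity (- (l / 2) * exp (- (l * t) * / 2) / S * (S * S - c * E)).
  - field; auto.
  - rewrite S_sq; field; split; auto; lra.
Qed.

Lemma Derive_phi t : Derive (phi l c) t = Omega0 l c t.
Proof. exact (is_derive_unique _ _ _ (is_derive_phi t)). Qed.

Lemma Derive_psi t : Derive (psi l c) t = - (l / 2) * phi l c t / exp (l * t).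
Proof. exact (is_derive_unique _ _ _ (is_derive_psi t)). Qed.

End Profiles.

Lemma Derive_exp_scal (l x : R) : Derive (fun s => exp (l * s)) x = l * exp (l * x).
Proof. apply is_derive_unique; auto_derive; auto; ring. Qed.

Lemma exp_double (l t : R) : exp (2 * l * t) = exp (l * t) * exp (l * t).
Proof. rewrite <- exp_plus; f_equal; ring. Qed.

Section LieDerivatives.

Variables (l c : R).
Hypotheses (l_neq0 : l <> 0) (c_ge0 : 0 <= c).

Ltac lie_compute :=
  cbv beta iota delta [lie sum4 pd upd gdS Kt Ups0 Upsi spatial_diag Nat.eqb Nat.leb andb];
  rewrite ?Derive_const, ?Derive_exp_scal, ?Derive_scal, ?Derive_scal_l, ?Derive_id,
    ?(Derive_phi l c c_ge0), ?(Derive_psi l c c_ge0), ?(Omega0_phi l c c_ge0), ?exp_double;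
  match goal with |- context [exp (l * ?t)] =>
    pose proof (exp_pos (l * t)); pose proof (conformal_factor_pos l c c_ge0 t)
  end;
  field; repeat split; auto; lra.

Lemma lie_Ups0 p mu nu : (mu <= 3)%nat -> (nu <= 3)%nat ->
  lie (Ups0 l c) (gdS l) p mu nu
  = 2 * Omega0 l c (p 0%nat) * (gdS l p mu nu + c * Kt l p mu nu).
Proof.
  intros mu_le3 nu_le3.
  destruct mu as [|[|[|[|]]]]; try lia; destruct nu as [|[|[|[|]]]]; try lia; lie_compute.
Qed.

Lemma lie_Upsi i p mu nu : (1 <= i <= 3)%nat -> (mu <= 3)%nat -> (nu <= 3)%nat ->
  lie (Upsi l c i) (gdS l) p mu nu
  = 2 * p i * Omega0 l c (p 0%nat) * (gdS l p mu nu + c * Kt l p mu nu).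
Proof.
  intros i_range mu_le3 nu_le3.
  destruct i as [|[|[|[|]]]]; try lia;
  destruct mu as [|[|[|[|]]]]; try lia; destruct nu as [|[|[|[|]]]]; try lia; lie_compute.
Qed.

End LieDerivatives.

Lemma Omega0_c0 l t : Omega0 l 0 t = l / 2 * exp (l * t / 2).
Proof. unfold Omega0; rewrite Rmult_0_l, Rplus_0_r, sqrt_1; field. Qed.

Lemma is_proper_CKV_Ups0 l : l <> 0 -> is_proper_CKV (Ups0 l 0) (gdS l).
Proof.
  intros l_neq0; exists (fun p => Omega0 l 0 (p 0%nat)); split.
  - intros p mu nu mu_le3 nu_le3; rewrite lie_Ups0; auto with real; ring.
  - exists (fun _ => 0), (fun _ => 2 / l); rewrite !Omega0_c0.
    replace (l * 0 / 2) with 0 by field; replace (l * (2 / l) / 2) with 1 by (field; auto).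
    rewrite exp_0; pose proof (exp_ineq1 1 ltac:(lra)) as e_gt2.
    intro sigma_eq; apply l_neq0.
    apply (Rmult_eq_reg_r (exp 1 - 1)); lra.
Qed.

Lemma is_proper_CKV_Upsi l i : l <> 0 -> (1 <= i <= 3)%nat ->
  is_proper_CKV (Upsi l 0 i) (gdS l).
Proof.
  intros l_neq0 i_range; exists (fun p => p i * Omega0 l 0 (p 0%nat)); split.
  - intros p mu nu mu_le3 nu_le3; rewrite lie_Upsi; auto with real; ring.
  - exists (fun _ => 0), (fun _ => 1); rewrite !Omega0_c0.
    pose proof (exp_pos (l * 1 / 2)); intro sigma_eq; apply l_neq0; nra.
Qed.

Section Lagrangian.

Variables (l m nv : R) (x v : pt).

Ltac unfold_Lag := cbv beta iota delta [dLdv dLdq dLdn Lag upd Nat.eqb].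

Lemma dLdv_time : nv <> 0 -> dLdv l m nv x v 0 = - v 0%nat / nv.
Proof. intros; unfold_Lag; apply is_derive_unique; auto_derive; auto; field; auto. Qed.

Lemma dLdv_space i : (1 <= i <= 3)%nat -> nv <> 0 ->
  dLdv l m nv x v i = exp (l * x 0%nat) * v i / nv.
Proof.
  intros i_range nv_neq0; destruct i as [|[|[|[|]]]]; try lia; unfold_Lag;
  apply is_derive_unique; auto_derive; auto; field; auto.
Qed.

Lemma dLdq_time : nv <> 0 ->
  dLdq l m nv x v 0 = l * exp (l * x 0%nat) * (v 1%nat ^ 2 + v 2%nat ^ 2 + v 3%nat ^ 2) / (2 * nv).
Proof. intros; unfold_Lag; apply is_derive_unique; auto_derive; auto; field; auto. Qed.

Lemma dLdq_space i : (1 <= i <= 3)%nat -> dLdq l m nv x v i = 0.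
Proof. intros i_range; destruct i as [|[|[|[|]]]]; try lia; unfold_Lag; apply Derive_const. Qed.

Lemma dLdn_eq : 0 < nv -> dLdn l m nv x v =
  - (- v 0%nat ^ 2 + exp (l * x 0%nat) * (v 1%nat ^ 2 + v 2%nat ^ 2 + v 3%nat ^ 2))
    / (2 * nv ^ 2) - m ^ 2 / 2.
Proof. intros; unfold_Lag; apply is_derive_unique; auto_derive; [lra | field; lra]. Qed.

End Lagrangian.

Lemma kappa_eq_sum_sq l m n q lam : kappa l m n q lam =
  mom l m n q 1 lam ^ 2 + mom l m n q 2 lam ^ 2 + mom l m n q 3 lam ^ 2.
Proof.
  unfold kappa; cbv beta iota delta [sum4 Kup ginv Kt spatial_diag Nat.eqb Nat.leb andb].
  assert (exp_cancel : exp (- (l * q lam 0%nat)) * exp (- (l * q lam 0%nat))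
                       * exp (2 * l * q lam 0%nat) = 1).
  { rewrite <- !exp_plus, <- exp_0; f_equal; ring. }
  set (e := exp (- _)) in *; set (f := exp (2 * l * _)) in *.
  transitivity ((e * e * f) * (mom l m n q 1 lam ^ 2 + mom l m n q 2 lam ^ 2
                               + mom l m n q 3 lam ^ 2)); [ring|].
  rewrite exp_cancel; ring.
Qed.

Lemma kappa_ge0 l m n q lam : 0 <= kappa l m n q lam.
Proof. rewrite kappa_eq_sum_sq; nra. Qed.

Definition quad (T : tensor) (x v : pt) : R :=
  sum4 (fun mu => sum4 (fun nu => T x mu nu * v mu * v nu)).

Lemma quad_gdS_cK l c x v :
  quad (fun y mu nu => gdS l y mu nu + c * Kt l y mu nu) x v
  = - v 0%nat ^ 2 + (1 + c * exp (l * x 0%nat)) * exp (l * x 0%nat)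
                    * (v 1%nat ^ 2 + v 2%nat ^ 2 + v 3%nat ^ 2).
Proof.
  cbv beta iota delta [quad sum4 gdS Kt spatial_diag Nat.eqb Nat.leb andb].
  rewrite exp_double; ring.
Qed.

Lemma contr_Ups0_eq l c m n q lam :
  contr (Ups0 l c) l m n q lam = phi l c (q lam 0%nat) * mom l m n q 0 lam.
Proof. cbv beta iota delta [contr sum4 Ups0 Nat.eqb]; ring. Qed.

Lemma contr_Upsi_eq l c m n q i lam : (1 <= i <= 3)%nat ->
  contr (Upsi l c i) l m n q lam
  = phi l c (q lam 0%nat) * q lam i * mom l m n q 0 lam
    - 2 / l * psi l c (q lam 0%nat) * mom l m n q i lam.
Proof.
  intros i_range; destruct i as [|[|[|[|]]]]; try lia;
  cbv beta iota delta [contr sum4 Upsi Nat.eqb]; ring.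
Qed.

Ltac exact_is_derive_upto_value D :=
  match type of D with is_derive _ _ ?d =>
  match goal with |- is_derive _ _ ?d' => replace d' with d; [exact D|] end end.

Section EulerLagrange.

Variables (l m : R) (I : R -> Prop) (n : R -> R) (q : R -> pt).
Hypothesis sol : is_EL_solution l m I n q.

Lemma mom_time lam : I lam -> mom l m n q 0 lam = - vel q 0 lam / n lam.
Proof.
  intros Ilam; destruct (sol lam Ilam) as [n_pos _].
  unfold mom; rewrite dLdv_time; [reflexivity | lra].
Qed.

Lemma mom_space i lam : (1 <= i <= 3)%nat -> I lam ->
  mom l m n q i lam = exp (l * q lam 0%nat) * vel q i lam / n lam.
Proof.
  intros i_range Ilam; destruct (sol lam Ilam) as [n_pos _].
  unfold mom; rewrite dLdv_space; [reflexivity | assumption | lra].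
Qed.

Lemma is_derive_coord k lam : (k <= 3)%nat -> I lam ->
  is_derive (fun s => q s k) lam (vel q k lam).
Proof. intros k_le3 Ilam; apply Derive_correct, (sol lam Ilam); assumption. Qed.

Lemma is_derive_mom_time lam : I lam ->
  is_derive (mom l m n q 0) lam
    (l * exp (l * q lam 0%nat) * (vel q 1 lam ^ 2 + vel q 2 lam ^ 2 + vel q 3 lam ^ 2)
     / (2 * n lam)).
Proof.
  intros Ilam; destruct (sol lam Ilam) as (n_pos & _ & EL & _).
  specialize (EL 0%nat ltac:(lia)); rewrite dLdq_time in EL by lra; exact EL.
Qed.

Lemma is_derive_mom_space i lam : (1 <= i <= 3)%nat -> I lam ->
  is_derive (mom l m n q i) lam 0.
Proof.
  intros i_range Ilam; destruct (sol lam Ilam) as (_ & _ & EL & _).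
  specialize (EL i ltac:(lia)); rewrite dLdq_space in EL by assumption; exact EL.
Qed.

Lemma mass_shell lam : I lam ->
  vel q 0 lam ^ 2 = exp (l * q lam 0%nat) * (vel q 1 lam ^ 2 + vel q 2 lam ^ 2 + vel q 3 lam ^ 2)
                    + m ^ 2 * n lam ^ 2.
Proof.
  intros Ilam; destruct (sol lam Ilam) as (n_pos & _ & _ & constraint).
  rewrite dLdn_eq in constraint by assumption; cbv beta in constraint.
  match type of constraint with ?lhs = 0 =>
    assert (scaled : lhs * (2 * n lam ^ 2) = 0) by (rewrite constraint; ring) end.
  field_simplify in scaled; lra.
Qed.

Lemma EL_velocity_null c lam : I lam -> c * kappa l m n q lam = m ^ 2 ->
  quad (fun y mu nu => gdS l y mu nu + c * Kt l y mu nu) (q lam) (fun k => vel q k lam) = 0.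
Proof.
  intros Ilam c_kappa; destruct (sol lam Ilam) as [n_pos _].
  rewrite quad_gdS_cK, (mass_shell lam Ilam), <- c_kappa, kappa_eq_sum_sq.
  rewrite !mom_space by (assumption || lia).
  field; lra.
Qed.

Section Contractions.

Variable c : R.
Hypothesis c_ge0 : 0 <= c.

Lemma is_derive_contr_Ups0 lam : I lam ->
  is_derive (contr (Ups0 l c) l m n q) lam
    (Omega0 l c (q lam 0%nat) / n lam
     * quad (fun y mu nu => gdS l y mu nu + c * Kt l y mu nu) (q lam) (fun k => vel q k lam)).
Proof.
  intros Ilam; destruct (sol lam Ilam) as [n_pos _].
  apply (is_derive_ext (fun s => phi l c (q s 0%nat) * mom l m n q 0 s)).
  { intros s; symmetry; apply contr_Ups0_eq. }
  pose proof (Derive.is_derive_mult _ _ lam _ _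
    (is_derive_comp (phi l c) _ lam _ _ (is_derive_phi l c c_ge0 _)
                    (is_derive_coord 0 lam ltac:(lia) Ilam))
    (is_derive_mom_time lam Ilam)) as D.
  exact_is_derive_upto_value D.
  rewrite quad_gdS_cK, mom_time, Omega0_phi by assumption; cbv beta.
  pose proof (conformal_factor_pos l c c_ge0 (q lam 0%nat)).
  unfold scal; simpl; unfold mult; simpl; field; split; lra.
Qed.

Lemma is_derive_contr_Upsi i lam : l <> 0 -> (1 <= i <= 3)%nat -> I lam ->
  is_derive (contr (Upsi l c i) l m n q) lam
    (q lam i * Omega0 l c (q lam 0%nat) / n lam
     * quad (fun y mu nu => gdS l y mu nu + c * Kt l y mu nu) (q lam) (fun k => vel q k lam)).
Proof.
  intros l_neq0 i_range Ilam; destruct (sol lam Ilam) as [n_pos _].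
  apply (is_derive_ext (fun s => phi l c (q s 0%nat) * q s i * mom l m n q 0 s
                                 - 2 / l * psi l c (q s 0%nat) * mom l m n q i s)).
  { intros s; symmetry; apply contr_Upsi_eq, i_range. }
  pose proof (is_derive_comp _ _ lam _ _ (is_derive_phi l c c_ge0 _)
                (is_derive_coord 0 lam ltac:(lia) Ilam)) as D_phi.
  pose proof (is_derive_comp _ _ lam _ _ (is_derive_psi l c c_ge0 _)
                (is_derive_coord 0 lam ltac:(lia) Ilam)) as D_psi.
  pose proof (is_derive_minus _ _ lam _ _
    (Derive.is_derive_mult _ _ lam _ _
       (Derive.is_derive_mult _ _ lam _ _ D_phi (is_derive_coord i lam ltac:(lia) Ilam))
       (is_derive_mom_time lam Ilam))
    (Derive.is_derive_mult _ _ lam _ _ (is_derive_scal _ lam (2 / l) _ D_psi)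
       (is_derive_mom_space i lam i_range Ilam))) as D.
  exact_is_derive_upto_value D.
  rewrite quad_gdS_cK, mom_time, mom_space, Omega0_phi by assumption; cbv beta.
  pose proof (conformal_factor_pos l c c_ge0 (q lam 0%nat)).
  pose proof (exp_pos (l * q lam 0%nat)).
  unfold scal, minus, plus, opp; simpl; unfold mult; simpl; field; repeat split; lra.
Qed.

End Contractions.

End EulerLagrange.

Lemma is_derive_0_const_on_interval (a b : Rbar) (f : R -> R) :
  (forall x, in_interval a b x -> is_derive f x 0) ->
  forall x y, in_interval a b x -> in_interval a b y -> f x = f y.
Proof.
  intros f_flat x y [a_lt_x x_lt_b] [a_lt_y y_lt_b].
  assert (between : forall z, Rmin x y <= z <= Rmax x y -> in_interval a b z).
  { intros z [min_le max_ge]; split.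
    - apply Rbar_lt_le_trans with (Finite (Rmin x y)); [|exact min_le].
      unfold Rmin; destruct Rle_dec; assumption.
    - apply Rbar_le_lt_trans with (Finite (Rmax x y)); [exact max_ge|].
      unfold Rmax; destruct Rle_dec; assumption. }
  destruct (MVT_gen f x y (fun _ => 0)) as [z [_ mvt]].
  - intros z z_in; apply f_flat, between; lra.
  - intros z z_in; apply continuity_pt_filterlim.
    exact (@ex_derive_continuous R_AbsRing R_NormedModule f z
             (ex_intro _ 0 (f_flat z (between z z_in)))).
  - lra.
Qed.

Section Conservation.

Variables (l m : R) (a b : Rbar) (n : R -> R) (q : R -> pt).
Hypothesis sol : is_EL_solution l m (in_interval a b) n q.

Lemma kappa_conserved lam1 lam2 : in_interval a b lam1 -> in_interval a b lam2 ->
  kappa l m n q lam1 = kappa l m n q lam2.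
Proof.
  intros I1 I2.
  assert (mom_conserved : forall i, (1 <= i <= 3)%nat -> mom l m n q i lam1 = mom l m n q i lam2).
  { intros i i_range; apply (is_derive_0_const_on_interval a b); try assumption.
    intros lam Ilam; exact (is_derive_mom_space l m _ n q sol i lam i_range Ilam). }
  rewrite !kappa_eq_sum_sq, !mom_conserved by lia; reflexivity.
Qed.

Variable c : R.
Hypotheses (l_neq0 : l <> 0) (c_ge0 : 0 <= c)
  (c_kappa : forall lam, in_interval a b lam -> c * kappa l m n q lam = m ^ 2).

Lemma contr_Ups0_conserved lam1 lam2 : in_interval a b lam1 -> in_interval a b lam2 ->
  contr (Ups0 l c) l m n q lam1 = contr (Ups0 l c) l m n q lam2.
Proof.
  apply is_derive_0_const_on_interval; intros lam Ilam.
  replace 0 with (Omega0 l c (q lam 0%nat) / n lam * 0) by ring.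
  rewrite <- (EL_velocity_null l m _ n q sol c lam Ilam (c_kappa lam Ilam)).
  exact (is_derive_contr_Ups0 l m _ n q sol c c_ge0 lam Ilam).
Qed.

Lemma contr_Upsi_conserved i lam1 lam2 : (1 <= i <= 3)%nat ->
  in_interval a b lam1 -> in_interval a b lam2 ->
  contr (Upsi l c i) l m n q lam1 = contr (Upsi l c i) l m n q lam2.
Proof.
  intros i_range; apply is_derive_0_const_on_interval; intros lam Ilam.
  replace 0 with (q lam i * Omega0 l c (q lam 0%nat) / n lam * 0) by ring.
  rewrite <- (EL_velocity_null l m _ n q sol c lam Ilam (c_kappa lam Ilam)).
  exact (is_derive_contr_Upsi l m _ n q sol c c_ge0 i lam l_neq0 i_range Ilam).
Qed.

End Conservation.

Theorem mainTheorem5 :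
  forall l : R, l <> 0 ->
  (forall c : R, 0 <= c ->
     forall (p : pt) (mu nu : nat), (mu <= 3)%nat -> (nu <= 3)%nat ->
       lie (Ups0 l c) (gdS l) p mu nu
         = 2 * Omega0 l c (p 0%nat) * (gdS l p mu nu + c * Kt l p mu nu)
       /\ (forall i : nat, (1 <= i <= 3)%nat ->
            lie (Upsi l c i) (gdS l) p mu nu
              = 2 * p i * Omega0 l c (p 0%nat) * (gdS l p mu nu + c * Kt l p mu nu)))
  /\ (is_proper_CKV (Ups0 l 0) (gdS l)
      /\ forall i : nat, (1 <= i <= 3)%nat -> is_proper_CKV (Upsi l 0 i) (gdS l))
  /\ (forall (m : R) (a b : Rbar) (n : R -> R) (q : R -> pt) (lam0 : R),
        is_EL_solution l m (in_interval a b) n q ->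
        in_interval a b lam0 ->
        kappa l m n q lam0 <> 0 ->
        let c := m ^ 2 / kappa l m n q lam0 in
        forall lam1 lam2 : R, in_interval a b lam1 -> in_interval a b lam2 ->
          contr (Ups0 l c) l m n q lam1 = contr (Ups0 l c) l m n q lam2
          /\ forall i : nat, (1 <= i <= 3)%nat ->
               contr (Upsi l c i) l m n q lam1 = contr (Upsi l c i) l m n q lam2).
Proof.
  intros l l_neq0; split; [|split].
  - intros c c_ge0 p mu nu mu_le3 nu_le3; split.
    + apply lie_Ups0; assumption.
    + intros i i_range; apply lie_Upsi; assumption.
  - split; [apply is_proper_CKV_Ups0 | intros i; apply is_proper_CKV_Upsi]; assumption.
  - intros m a b n q lam0 sol I0 kappa0_neq0 c lam1 lam2 I1 I2.
    assert (kappa0_pos : 0 < kappa l m n q lam0)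
      by (pose proof (kappa_ge0 l m n q lam0); lra).
    assert (c_ge0 : 0 <= c) by (apply Rdiv_le_0_compat; [nra | assumption]).
    assert (c_kappa : forall lam, in_interval a b lam -> c * kappa l m n q lam = m ^ 2).
    { intros lam Ilam; rewrite (kappa_conserved l m a b n q sol lam lam0) by assumption.
      unfold c; field; assumption. }
    split; [|intros i i_range].
    + exact (contr_Ups0_conserved l m a b n q sol c c_ge0 c_kappa lam1 lam2 I1 I2).
    + exact (contr_Upsi_conserved l m a b n q sol c l_neq0 c_ge0 c_kappa i lam1 lam2
               i_range I1 I2).
Qed.
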